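(* Let $k\in\mathbb N$ and let $G_c=(V_c,E_c)$ be a connected finite simple undirected graph with vertices $v_1,\dots,v_{n_c}$. Construct the gadget graph $G_g=(V_g,E_g)$ as follows: replace every edge of $G_c$ by a path of length $3$ (with two new internal vertices), and for every pair of distinct non-adjacent vertices of $G_c$ add a path of length $2$ between them (with one new internal vertex); all new vertices are distinct, and they are numbered $v_{n_c+1},\dots,v_{n_g}$, where $n_g=|V_g|$. Let $n=n_g+1$ and define the $n\times n$ matrix $D$ by $D_{ij}=d_{G_g}(v_i,v_j)$ for $i,j\in[n_g]$, $D_{in}=D_{ni}=2$ for $i\in[n_c]$, $D_{in}=D_{ni}=3$ for $i\in[n_g]\setminus[n_c]$, and $D_{nn}=0$. Then $G_c$ is $k$-colourable (i.e. there is $\chi:V_c\to[k]$ with $\chi(u)\ne\chi(w)$ for every edge $\{u,w\}\in E_c$) if and only if there exists a graph realisation $(G=(V,E),\Phi)$ of $D$ with $|V|\le n+k$.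
   Context: $[m]=\{1,\dots,m\}$. $d_{G_g}$ is the shortest-path distance in $G_g$. A graph realisation of an $n\times n$ matrix $D$ with non-negative integer entries is a pair $(G,\Phi)$, where $G=(V,E)$ is a finite simple undirected unweighted graph and $\Phi:[n]\to V$ is an injective map such that $d_G(\Phi(i),\Phi(j))=D_{ij}$ for all $i,j\in[n]$; here $d_G$ denotes the shortest-path distance in $G$ (equal to $\infty$ if no path exists). *)

From mathcomp Require Import all_boot.
Set Implicit Arguments.
Unset Strict Implicit.
Unset Printing Implicit Defensive.

Definition simple_graph (V : finType) (adj : rel V) : Prop :=
  symmetric adj /\ irreflexive adj.

Fixpoint walk_set (V : finType) (adj : rel V) (x : V) (m : nat) : {set V} :=
  match m with
  | 0 => [set x]
  | m'.+1 => [set z | [exists y in walk_set adj x m', adj y z]]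
  end.

(** A shortest walk is a path, hence has length < #|V|. *)
Definition gdist (V : finType) (adj : rel V) (x y : V) : option nat :=
  let m := find (fun m => y \in walk_set adj x m) (iota 0 #|V|) in
  if m < #|V| then Some m else None.

Definition realises (I : finType) (D : I -> I -> nat)
    (V : finType) (adj : rel V) (Phi : I -> V) : Prop :=
  simple_graph adj /\ injective Phi /\
  forall i j, gdist adj (Phi i) (Phi j) = Some (D i j).

Definition colourable (nc : nat) (e : rel 'I_nc) (k : nat) : Prop :=
  exists chi : 'I_nc -> 'I_k, forall u w, e u w -> chi u != chi w.

Definition gconnected (V : finType) (adj : rel V) : Prop :=
  forall x y : V, connect adj x y.

(** New vertices: for i < j, with {i,j} an edge, two internal vertices
    (i,j,false) (adjacent to i) and (i,j,true) (adjacent to j);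
    for i < j non-adjacent, one internal vertex (i,j,false). *)
Definition gadget_valid (nc : nat) (e : rel 'I_nc)
    (x : 'I_nc * 'I_nc * bool) : bool :=
  let: (i, j, b) := x in (i < j)%N && (e i j || ~~ b).

Definition new_vertex (nc : nat) (e : rel 'I_nc) : finType :=
  {x : 'I_nc * 'I_nc * bool | gadget_valid e x}.

Definition gadget_vertex (nc : nat) (e : rel 'I_nc) : finType :=
  ('I_nc + new_vertex e)%type.

Definition gadget_half (nc : nat) (e : rel 'I_nc)
    (x y : gadget_vertex e) : bool :=
  match x, y with
  | inl u, inr s =>
      let: (i, j, b) := val s in
      if e i j then (~~ b && (u == i)) || (b && (u == j))
      else (u == i) || (u == j)
  | inr s, inr t =>
      let: (i, j, b) := val s in
      let: (i', j', b') := val t in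
      [&& e i j, i == i', j == j', ~~ b & b']
  | _, _ => false
  end.

Definition gadget_adj (nc : nat) (e : rel 'I_nc) : rel (gadget_vertex e) :=
  fun x y => gadget_half x y || gadget_half y x.

(** The matrix D, indexed by [option (gadget_vertex e)]: [Some v] are the
    vertices of G_g, [None] is the extra index n. *)
Definition gadget_matrix (nc : nat) (e : rel 'I_nc)
    (p q : option (gadget_vertex e)) : nat :=
  match p, q with
  | Some x, Some y => odflt 0 (gdist (@gadget_adj nc e) x y)
  | Some (inl _), None | None, Some (inl _) => 2
  | Some (inr _), None | None, Some (inr _) => 3
  | None, None => 0
  end.

(* Forward: from a k-colouring chi, add to G_g the extra vertex z and k colour vertices
   c_1, ..., c_k, joining z to every c_t and each vertex v of G_c to c_(chi v).  The new
   paths v - c_t - w only join vertices of equal colour, which are non-adjacent in G_c and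
   hence already at distance at most 2 in G_g, so distances in G_g are unchanged; this is
   certified by the intended distance function from each vertex, which is 1-Lipschitz
   along every edge.  Backward: every Phi v, v in G_c, is at distance 2 from Phi z, and a
   middle vertex cannot lie in the image of Phi (the row of z has no entry 1).  There are
   at most k vertices outside that image, and adjacent vertices of G_c, at distance 3 in
   G_g, cannot share a middle vertex, so a choice of middle vertices is a k-colouring. *)

From mathcomp Require Import all_boot zify.
Set Implicit Arguments. Unset Strict Implicit. Unset Printing Implicit Defensive.

Section Walks.
Variables (V : finType) (adj : rel V).
Local Notation ws := (walk_set adj).

Lemma walk_set0 x : x \in ws x 0.
Proof. exact: set11. Qed.

Lemma walk_setS x m y z : y \in ws x m -> adj y z -> z \in ws x m.+1.
Proof. by move=> Hy Hyz; rewrite inE; apply/existsP; exists y; rewrite Hy. Qed.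

Lemma walk_setSP x m z : z \in ws x m.+1 -> exists2 y, y \in ws x m & adj y z.
Proof. by rewrite inE => /existsP [y /andP [Hy Hyz]]; exists y. Qed.

Lemma walk_set1 x y : (y \in ws x 1) = adj x y.
Proof.
apply/idP/idP => [/walk_setSP [z /set1P -> //] | Hxy].
exact: walk_setS (walk_set0 x) Hxy.
Qed.

Lemma walk_set2P x y : reflect (exists2 z, adj x z & adj z y) (y \in ws x 2).
Proof.
apply: (iffP idP) => [/walk_setSP [z] | [z Hxz Hzy]].
  by rewrite walk_set1; exists z.
by apply: walk_setS Hzy; rewrite walk_set1.
Qed.

Lemma walk_set_cat x y z m1 m2 :
  y \in ws x m1 -> z \in ws y m2 -> z \in ws x (m1 + m2).
Proof.
move=> Hy; elim: m2 z => [|m IH] z; first by rewrite addn0 => /set1P ->.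
by move=> /walk_setSP [w Hw Hwz]; rewrite addnS; apply: walk_setS (IH _ Hw) Hwz.
Qed.

Lemma walk_set_path x p : path adj x p -> last x p \in ws x (size p).
Proof.
elim: p x => [|y p IH] x; first by move=> _; apply: walk_set0.
move=> /andP [Hxy Hp].
by apply: (walk_set_cat (m1 := 1)) (IH _ Hp); rewrite walk_set1.
Qed.

Lemma connect_walk_set x y m : y \in ws x m -> connect adj x y.
Proof.
elim: m y => [|m IH] y; first by move=> /set1P ->.
by move=> /walk_setSP [z /IH Hxz Hzy]; apply: connect_trans Hxz (connect1 Hzy).
Qed.

(* A shortest walk is a path, which has fewer than #|V| edges. *)
Lemma walk_set_short x y m :
  y \in ws x m -> exists2 d, d < #|V| & y \in ws x d.
Proof.
move=> /connect_walk_set /connectP [p Hp ->].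
case: (shortenP Hp) => p' Hp' Huniq _; exists (size p'); last exact: walk_set_path.
by move/card_uniqP: Huniq => /= <-; apply: max_card.
Qed.

Lemma walk_set_sym : symmetric adj -> forall m x y, (y \in ws x m) = (x \in ws y m).
Proof.
move=> Hsym m.
suff Hsub x y : y \in ws x m -> x \in ws y m by move=> x y; apply/idP/idP; apply: Hsub.
elim: m x y => [|m IH] x y; first by move=> /set1P ->; apply: walk_set0.
move=> /walk_setSP [z /IH Hzx Hzy].
by apply: (walk_set_cat (m1 := 1)) Hzx; rewrite walk_set1 Hsym.
Qed.

Lemma walk_set_potential (f : V -> nat) x :
  f x = 0 -> (forall a b, adj a b -> f b <= (f a).+1) ->
  forall m y, y \in ws x m -> f y <= m.
Proof.
move=> Hfx Hf; elim=> [|m IH] y; first by move=> /set1P ->; rewrite Hfx.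
by move=> /walk_setSP [z /IH Hz Hzy]; apply: leq_trans (Hf _ _ Hzy) _.
Qed.

Lemma gdist_walk_set x y d : gdist adj x y = Some d -> y \in ws x d.
Proof.
rewrite /gdist; case: ifP => // Hlt [<-].
have Hhas : has (fun m => y \in ws x m) (iota 0 #|V|) by rewrite has_find size_iota.
by move: (nth_find 0 Hhas); rewrite nth_iota.
Qed.

Lemma gdist_leq_walk x y d m : gdist adj x y = Some d -> y \in ws x m -> d <= m.
Proof.
rewrite /gdist; case: ifP => // Hlt [<-] Hm; rewrite leqNgt; apply/negP => Hltm.
by have := before_find 0 Hltm; rewrite nth_iota ?add0n ?Hm //; apply: ltn_trans Hlt.
Qed.

Lemma gdist_of_walk_set x y m : y \in ws x m -> exists d, gdist adj x y = Some d.
Proof.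
move=> /walk_set_short [d HdV Hd].
have : has (fun m => y \in ws x m) (iota 0 #|V|).
  by apply/hasP; exists d; rewrite // mem_iota add0n HdV.
by rewrite has_find size_iota /gdist => ->; eexists.
Qed.

Lemma gdist_walk_setE x y d :
  y \in ws x d -> (forall m, y \in ws x m -> d <= m) -> gdist adj x y = Some d.
Proof.
move=> Hd Hmin; have [d' Hd'] := gdist_of_walk_set Hd.
rewrite Hd'; congr Some; apply/eqP.
by rewrite eqn_leq (gdist_leq_walk Hd' Hd) Hmin // (gdist_walk_set Hd').
Qed.

Lemma gdist_sym : symmetric adj -> forall x y, gdist adj x y = gdist adj y x.
Proof.
by move=> Hsym x y; rewrite /gdist (eq_find (fun m => walk_set_sym Hsym m x y)).
Qed.

End Walks.

Lemma walk_set_hom (V W : finType) (adjV : rel V) (adjW : rel W) (g : V -> W) :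
  (forall a b, adjV a b -> adjW (g a) (g b)) ->
  forall m x y, y \in walk_set adjV x m -> g y \in walk_set adjW (g x) m.
Proof.
move=> Hg; elim=> [|m IH] x y; first by move=> /set1P ->; apply: walk_set0.
by move=> /walk_setSP [z /IH Hz Hzy]; apply: walk_setS Hz (Hg _ _ Hzy).
Qed.

Definition depth (T U : Type) (x : T + U) : nat := if x is inl _ then 0 else 1.

Section Gadget.
Variables (nc : nat) (e : rel 'I_nc).
Hypothesis He : simple_graph e.
Local Notation ga := (@gadget_adj nc e).
Local Notation ws := (walk_set ga).

Lemma gadget_adj_sym : symmetric ga.
Proof. by move=> x y; rewrite /gadget_adj orbC. Qed.

Lemma gadget_simple : simple_graph ga.
Proof.
split; first exact: gadget_adj_sym.
move=> [u|[[[i j] b] Hv]] //; rewrite /gadget_adj /gadget_half /=.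
by case: b {Hv}; rewrite !andbF.
Qed.

Lemma gadget_depth_walk x : exists a, inl a \in ws x (depth x).
Proof.
case: x => [u|[[[i j] b] Hv]]; first by exists u; apply: walk_set0.
rewrite [depth _]/=; case Eij: (e i j); last first.
  by exists i; rewrite walk_set1 /gadget_adj /gadget_half /= Eij eqxx.
by exists (if b then j else i); rewrite walk_set1 /gadget_adj /gadget_half /= Eij;
  case: b {Hv} => /=; rewrite eqxx ?orbT.
Qed.

Lemma gadget_edge_walk u w : e u w -> inl w \in ws (inl u) 3.
Proof.
case: He => Hsym Hirr.
wlog Hlt : u w / u < w => [Hwlog Euw|Euw].
  case: (ltngtP u w) => [Hlt|Hlt|/val_inj Huw]; first exact: Hwlog.
  - rewrite walk_set_sym; last exact: gadget_adj_sym.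
    by apply: Hwlog; rewrite // Hsym.
  - by rewrite Huw Hirr in Euw.
have Hv1 : gadget_valid e (u, w, false) by rewrite /= Hlt orbT.
have Hv2 : gadget_valid e (u, w, true) by rewrite /= Hlt Euw.
apply: (@walk_setS _ _ _ _ (inr (exist _ (u, w, true) Hv2))).
  apply: (@walk_set_cat _ _ _ (inr (exist _ (u, w, false) Hv1)) _ 1 1).
    by rewrite walk_set1 /gadget_adj /gadget_half /= Euw !eqxx.
  by rewrite walk_set1 /gadget_adj /gadget_half /= Euw !eqxx.
by rewrite /gadget_adj /gadget_half /= Euw !eqxx ?orbT.
Qed.

Lemma gadget_nonedge_walk u w : u != w -> ~~ e u w -> inl w \in ws (inl u) 2.
Proof.
case: He => Hsym _.
wlog Hlt : u w / u < w => [Hwlog Huw Euw|_ Euw].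
  case: (ltngtP u w) => [Hlt|Hlt|/val_inj Heq]; first exact: Hwlog.
  - rewrite walk_set_sym; last exact: gadget_adj_sym.
    by apply: Hwlog; rewrite // 1?eq_sym // Hsym.
  - by rewrite Heq eqxx in Huw.
have Hv : gadget_valid e (u, w, false) by rewrite /= Hlt orbT.
apply/walk_set2P; exists (inr (exist _ (u, w, false) Hv));
  by rewrite /gadget_adj /gadget_half /= (negbTE Euw) !eqxx ?orbT.
Qed.

Lemma gadget_edge_no_short_walk u w m :
  e u w -> m <= 2 -> inl w \notin ws (inl u) m.
Proof.
case: He => Hsym Hirr Euw; have Huw : u != w by apply: contraTneq Euw => ->; rewrite Hirr.
case: m => [|[|[|//]]] _.
- by apply/negP => /set1P [] /eqP; rewrite eq_sym (negbTE Huw).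
- by rewrite walk_set1.
apply/walk_set2P => -[[//|[[[i j] b] Hv]]]; rewrite /gadget_adj /gadget_half /= !orbF {Hv}.
case Eij: (e i j).
  by case: b => /=; rewrite ?andbF ?orbF ?andbT => /eqP Hu /eqP Hw; rewrite Hu Hw eqxx in Huw.
case/orP=> /eqP Hu; case/orP=> /eqP Hw; move: Huw Euw; rewrite Hu Hw ?eqxx // => _.
  by rewrite Eij.
by rewrite Hsym Eij.
Qed.

Hypothesis Hc : gconnected e.

Lemma gadget_walk_exists_inl u w : exists m, inl w \in ws (inl u) m.
Proof.
have /connectP [p Hp ->] := Hc u w.
elim: p u Hp => [|v p IH] u; first by exists 0; apply: walk_set0.
move=> /andP [Huv Hp]; have [m Hm] := IH _ Hp.
by exists (3 + m); apply: walk_set_cat (gadget_edge_walk Huv) Hm.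
Qed.

Lemma gadget_walk_exists x y : exists m, y \in ws x m.
Proof.
have [a Ha] := gadget_depth_walk x; have [b Hb] := gadget_depth_walk y.
have [m Hm] := gadget_walk_exists_inl a b.
exists (depth x + m + depth y); apply: walk_set_cat (walk_set_cat Ha Hm) _.
by rewrite walk_set_sym //; apply: gadget_adj_sym.
Qed.

Definition gadget_dist x y := odflt 0 (gdist ga x y).

Lemma gadget_distE x y : gdist ga x y = Some (gadget_dist x y).
Proof.
have [m /gdist_of_walk_set [d Hd]] := gadget_walk_exists x y.
by rewrite /gadget_dist Hd.
Qed.

Lemma gadget_dist_walk x y : y \in ws x (gadget_dist x y).
Proof. exact: gdist_walk_set (gadget_distE x y). Qed.

Lemma gadget_dist_leq x y m : y \in ws x m -> gadget_dist x y <= m.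
Proof. exact: gdist_leq_walk (gadget_distE x y). Qed.

Lemma gadget_dist_adj x y z : ga y z -> gadget_dist x z <= (gadget_dist x y).+1.
Proof. by move=> Hyz; apply/gadget_dist_leq/(walk_setS (gadget_dist_walk x y) Hyz). Qed.

Lemma gadget_dist_triangle x y z : gadget_dist x z <= gadget_dist x y + gadget_dist y z.
Proof. exact/gadget_dist_leq/(walk_set_cat (gadget_dist_walk x y) (gadget_dist_walk y z)). Qed.

Lemma gadget_dist_xx x : gadget_dist x x = 0.
Proof. by apply/eqP; rewrite -leqn0; apply/gadget_dist_leq/walk_set0. Qed.

Lemma gadget_dist_eq0 x y : gadget_dist x y = 0 -> x = y.
Proof. by move=> H0; have := gadget_dist_walk x y; rewrite H0 => /set1P. Qed.

Lemma gadget_dist_nonedge u w : ~~ e u w -> gadget_dist (inl u) (inl w) <= 2.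
Proof.
move=> Euw; have [->|Huw] := eqVneq u w; first by rewrite gadget_dist_xx.
exact/gadget_dist_leq/gadget_nonedge_walk.
Qed.

Lemma gadget_dist_inl_leq3 u w : gadget_dist (inl u) (inl w) <= 3.
Proof.
case Euw: (e u w); first exact/gadget_dist_leq/gadget_edge_walk.
by apply: leq_trans (gadget_dist_nonedge (negbT Euw)) _.
Qed.

Lemma gadget_dist_edge u w : e u w -> gadget_dist (inl u) (inl w) = 3.
Proof.
move=> Euw; apply/eqP; rewrite eqn_leq gadget_dist_inl_leq3 ltnNge /=.
apply/negP => Hle; move/negP: (gadget_edge_no_short_walk Euw Hle); apply.
exact: gadget_dist_walk.
Qed.

Lemma depth_leq_gadget_dist x u : depth x <= gadget_dist x (inl u).
Proof. by case: x => [//|s]; rewrite lt0n; apply/eqP => /gadget_dist_eq0. Qed.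

Lemma gadget_dist_depth x : exists u, gadget_dist x (inl u) <= depth x.
Proof. by have [u Hu] := gadget_depth_walk x; exists u; apply: gadget_dist_leq. Qed.

Lemma gadget_dist_inl_ub x u : gadget_dist x (inl u) <= (depth x).+3.
Proof.
have [a Ha] := gadget_dist_depth x.
have := gadget_dist_triangle x (inl a) (inl u); have := gadget_dist_inl_leq3 a u; lia.
Qed.

End Gadget.

Section ColouredGadget.
Variables (nc : nat) (e : rel 'I_nc) (k : nat) (chi : 'I_nc -> 'I_k).
Hypotheses (He : simple_graph e) (Hc : gconnected e).
Hypothesis Hchi : forall u w, e u w -> chi u != chi w.
Local Notation ga := (@gadget_adj nc e).
Local Notation dist := (@gadget_dist nc e).
Local Notation vertex := (option (gadget_vertex e) + 'I_k)%type.

Definition coloured_half (p q : vertex) : bool :=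
  match p, q with
  | inl (Some y), inl (Some z) => ga y z
  | inl (Some (inl u)), inr t => chi u == t
  | inl None, inr _ => true
  | _, _ => false
  end.

Definition coloured_adj : rel vertex := fun p q => coloured_half p q || coloured_half q p.
Local Notation cws := (walk_set coloured_adj).

Lemma coloured_simple : simple_graph coloured_adj.
Proof.
split; first by move=> p q; rewrite /coloured_adj orbC.
move=> [[y|]|t]; rewrite /coloured_adj /= ?orbb //.
by case: y => [u|s]; case: (gadget_simple e) => _ ->.
Qed.

Definition colour_excess (x : gadget_vertex e) (t : 'I_k) : nat :=
  \max_(a | chi a == t) ((depth x).+2 - dist x (inl a)).

(* The distance from [x] to the colour vertex [t] is
   min (depth x + 3, 1 + min_(chi a = t) dist x a), written with a truncated max. *)
Definition colour_potential (x : gadget_vertex e) (p : vertex) : nat :=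
  match p with
  | inl (Some y) => dist x y
  | inl None => (depth x).+2
  | inr t => (depth x).+3 - colour_excess x t
  end.

Lemma colour_excess_leq2 x t : colour_excess x t <= 2.
Proof.
apply/bigmax_leqP => a _; have := depth_leq_gadget_dist He Hc x a; lia.
Qed.

Lemma colour_excess_lb x u :
  (depth x).+2 - dist x (inl u) <= colour_excess x (chi u).
Proof. exact: (leq_bigmax_cond u (eqxx (chi u))). Qed.

Lemma colour_excess_ub x u :
  colour_excess x (chi u) <= (depth x).+4 - dist x (inl u).
Proof.
have Hxu := gadget_dist_inl_ub He Hc x u.
apply/bigmax_leqP => a /eqP Ha.
have Hau : dist (inl a) (inl u) <= 2.
  apply: (gadget_dist_nonedge He Hc); apply: contraT; rewrite negbK => /Hchi.
  by rewrite Ha eqxx.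
have := gadget_dist_triangle He Hc x (inl a) (inl u); lia.
Qed.

Lemma colour_potential_lipschitz x p q : coloured_half p q ->
  colour_potential x q <= (colour_potential x p).+1 /\
  colour_potential x p <= (colour_potential x q).+1.
Proof.
case: p => [[y|]|t]; case: q => [[z|]|t'] //=.
- move=> Hyz; have {}Hyz : ga y z by case: y Hyz.
  split; apply: (gadget_dist_adj He Hc) => //; by rewrite gadget_adj_sym.
- by case: y.
- case: y => // u /eqP <-.
  have := colour_excess_lb x u; have := colour_excess_ub x u.
  have := gadget_dist_inl_ub He Hc x u.
  move: (depth x) (dist x (inl u)) (colour_excess x (chi u)); lia.
- have := colour_excess_leq2 x t'; move: (depth x) (colour_excess x t'); lia.
Qed.

Lemma colour_potential_walk x m p :
  p \in cws (inl (Some x)) m -> colour_potential x p <= m.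
Proof.
apply: walk_set_potential => [|a b]; first exact: gadget_dist_xx.
by case/orP => /(colour_potential_lipschitz x) [].
Qed.

Lemma gadget_walk_coloured m x y :
  y \in walk_set ga x m -> (inl (Some y) : vertex) \in cws (inl (Some x)) m.
Proof.
apply: (walk_set_hom (g := fun z => inl (Some z))) => a b Hab.
by rewrite /coloured_adj /=; case: a Hab => ? ->.
Qed.

Lemma coloured_gdist_gadget x y :
  gdist coloured_adj (inl (Some x)) (inl (Some y)) = Some (dist x y).
Proof.
apply: gdist_walk_setE; first exact/gadget_walk_coloured/gadget_dist_walk.
by move=> m; apply: colour_potential_walk.
Qed.

Lemma coloured_gdist_apex x :
  gdist coloured_adj (inl (Some x)) (inl None) = Some (depth x).+2.
Proof.
apply: gdist_walk_setE => [|m]; last exact: colour_potential_walk.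
have [a Ha] := gadget_depth_walk x.
apply: (@walk_setS _ _ _ _ (inr (chi a))) => //.
apply: (@walk_setS _ _ _ _ (inl (Some (inl a)))); first exact: gadget_walk_coloured.
by rewrite /coloured_adj /= eqxx.
Qed.

Lemma coloured_gdist p q :
  gdist coloured_adj (inl p) (inl q) = Some (gadget_matrix p q).
Proof.
have Hsym : symmetric coloured_adj := coloured_simple.1.
case: p => [x|]; case: q => [y|].
- by rewrite coloured_gdist_gadget; case: x.
- by rewrite coloured_gdist_apex; case: x.
- by rewrite gdist_sym // coloured_gdist_apex; case: y.
- by apply: gdist_walk_setE => [|m]; first exact: walk_set0.
Qed.

End ColouredGadget.

Lemma colourable_leq nc (e : rel 'I_nc) k k' : colourable e k -> k <= k' -> colourable e k'.
Proof.
move=> [chi Hchi] Hk; exists (fun u => widen_ord Hk (chi u)) => u w /Hchi.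
by apply: contra => /eqP [] Heq; apply/eqP/val_inj.
Qed.

Lemma colourable_of_separating nc (e : rel 'I_nc) (V : finType) (A : {set V})
    (mu : 'I_nc -> V) :
  (forall u, mu u \in A) -> (forall u w, e u w -> mu u != mu w) -> colourable e #|A|.
Proof.
move=> HA Hmu; exists (fun u => enum_rank_in (HA u) (mu u)) => u w /Hmu.
apply: contra => /eqP Heq; apply/eqP.
by rewrite -(enum_rankK_in (HA u) (HA u)) Heq enum_rankK_in.
Qed.

Lemma realisation_colourable nc (e : rel 'I_nc) k (V : finType) (adj : rel V)
    (Phi : option (gadget_vertex e) -> V) :
  simple_graph e -> gconnected e -> realises (gadget_matrix (e:=e)) adj Phi ->
  #|V| <= #|{: option (gadget_vertex e)}| + k -> colourable e k.
Proof.
move=> He Hc [[Hsym Hirr] [Hinj Hd]] Hcard.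
have /fin_all_exists [mu Hmu] :
    forall u, exists z, adj (Phi None) z && adj z (Phi (Some (inl u))).
  move=> u; have /walk_set2P [z Hz1 Hz2] := gdist_walk_set (Hd None (Some (inl u))).
  by exists z; rewrite Hz1 Hz2.
pose A := ~: [set v in codom Phi].
apply: (colourable_leq (@colourable_of_separating _ _ _ A mu _ _)).
- move=> u; rewrite !inE; apply/codomP => -[p Hp]; case/andP: (Hmu u); rewrite Hp.
  case: p {Hp} => [x|]; last by rewrite Hirr.
  move=> /[dup] /= Hadj; rewrite -walk_set1 => /(gdist_leq_walk (Hd None (Some x))).
  by case: x {Hadj}.
- move=> u w Euw; apply/eqP => Heq.
  have : Phi (Some (inl w)) \in walk_set adj (Phi (Some (inl u))) 2.
    have /andP [_ Hu] := Hmu u; have /andP [_ Hw] := Hmu w.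
    by apply/walk_set2P; exists (mu u); [rewrite Hsym | rewrite Heq].
  move=> /(gdist_leq_walk (Hd (Some (inl u)) (Some (inl w)))).
  by rewrite /= -/(gadget_dist _ _) gadget_dist_edge.
- have Hcodom : #|[set v in codom Phi]| = #|{: option (gadget_vertex e)}|.
    by rewrite cardsE (card_codom Hinj).
  have := cardsC [set v in codom Phi]; rewrite -/A; lia.
Qed.

Theorem mainTheorem2 (k nc : nat) (e : rel 'I_nc) :
  simple_graph e -> gconnected e ->
  colourable e k <->
  exists (V : finType) (adj : rel V) (Phi : option (gadget_vertex e) -> V),
    realises (gadget_matrix (e:=e)) adj Phi /\
    (#|V| <= #|{: option (gadget_vertex e)}| + k)%N.
Proof.
move=> He Hc; split => [[chi Hchi] | [V [adj [Phi [HPhi Hcard]]]]].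
- exists _, (coloured_adj chi), inl; split; last by rewrite card_sum card_ord.
  split; first exact: coloured_simple.
  by split; [exact: inl_inj | exact: coloured_gdist].
- exact: realisation_colourable HPhi Hcard.
Qed.
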